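(* Let $p$ be an odd prime, $n$ a positive integer, $q=p^n$ (so $q^2=p^{2n}$), and let $k$ be an integer with $1\le k\le n$ such that $2n/\gcd(2n,k)$ is odd. Let $f$ be either $f(x)=x^2$ or $f(x)=x^{p^k+1}$ on $\mathbb F_{q^2}$, and let $\theta\in\mathbb F_{q^2}^*$ be such that $\theta^{q+1}$ is a nonsquare in $\mathbb F_q$. Then the unital $\mathcal U_\theta:=\{(x,t\theta):x\in\mathbb F_{q^2},t\in\mathbb F_q\}\cup\{(\infty)\}$ in $\Pi(f)$ contains an O'Nan configuration.
   Context: For a planar function $f$ on $\mathbb F_{q^2}$ (i.e.\ $x\mapsto f(x+a)-f(x)$ is bijective for each $a\neq0$; both functions above are planar), $\Pi(f)$ is the projective plane with points $(x,y)\in\mathbb F_{q^2}^2$ and $(a)$ for $a\in\mathbb F_{q^2}\cup\{\infty\}$, lines $L_{a,b}=\{(x,f(x+a)-b):x\in\mathbb F_{q^2}\}\cup\{(a)\}$, $N_a=\{(a,y):y\in\mathbb F_{q^2}\}\cup\{(\infty)\}$ ($a,b\in\mathbb F_{q^2}$), $L_\infty=\{(a):a\in\mathbb F_{q^2}\cup\{\infty\}\}$. A unital is a set of $q^3+1$ points meeting every line in $1$ or $q+1$ points, regarded as a design whose blocks are its intersections with lines meeting it in $q+1$ points. An O'Nan configuration consists of four blocks, any two of which meet, such that the six pairwise intersection points are distinct. *)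

From mathcomp Require Import all_boot all_order all_algebra.
Set Implicit Arguments. Unset Strict Implicit. Unset Printing Implicit Defensive.
Import GRing.Theory.
Local Open Scope ring_scope.

(* Points of Pi(f):  inl (x,y) = affine point (x,y);
   inr (Some a) = point (a);  inr None = point (infinity). *)
Definition pt (F : finFieldType) : finType := ((F * F) + option F)%type.
(* Lines of Pi(f):  inl (a,b) = L_{a,b};  inr (Some a) = N_a;  inr None = L_infinity. *)
Definition ln (F : finFieldType) : finType := ((F * F) + option F)%type.

Definition incident (F : finFieldType) (f : F -> F) (P : pt F) (l : ln F) : bool :=
  match l, P with
  | inl (a, b), inl (x, y) => y == f (x + a) - b
  | inl (a, _), inr (Some c) => c == a
  | inl _, inr None => false
  | inr (Some a), inl (x, _) => x == a
  | inr (Some _), inr o => o == None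
  | inr None, inl _ => false
  | inr None, inr _ => true
  end.

Definition line_pts (F : finFieldType) (f : F -> F) (l : ln F) : {set pt F} :=
  [set P | incident f P l].

Definition U_theta (F : finFieldType) (q : nat) (theta : F) : {set pt F} :=
  [set P : pt F | match P with
                  | inl (x, y) => [exists t : F, (t ^+ q == t) && (y == t * theta)]
                  | inr o => o == None
                  end].

(* block of the design U on line l (only meaningful when it has q+1 points) *)
Definition block (F : finFieldType) (f : F -> F) (U : {set pt F}) (l : ln F) : {set pt F} :=
  U :&: line_pts f l.

Definition is_block_line (F : finFieldType) (f : F -> F) (q : nat) (U : {set pt F}) (l : ln F) : bool :=
  #|block f U l| == q.+1.

Definition has_ONan (F : finFieldType) (f : F -> F) (q : nat) (U : {set pt F}) : Prop :=
  exists l : 'I_4 -> ln F,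
    (forall i, is_block_line f q U (l i)) /\
    (forall i j, i != j -> block f U (l i) != block f U (l j)) /\
    exists P : 'I_4 -> 'I_4 -> pt F,
      (forall i j, i != j -> block f U (l i) :&: block f U (l j) = [set P i j]) /\
      (forall i j i' j' : 'I_4, (i < j)%N -> (i' < j')%N -> (i != i') || (j != j') ->
          P i j != P i' j').

(* Write F_q theta for the additive group {t theta : t in F_q}; the affine points of
   U_theta on L_{a,b} correspond to the y with f(y) - b in F_q theta.  Since theta^(q+1)
   is a nonsquare of F_q, no nonzero square lies in F_q theta, and f(y) is a square
   vanishing only at y = 0; so there is exactly one such y when b is in F_q theta.
   Double counting with planarity fixes the first two moments of this number over b,
   which forces it to be q+1 for every b outside F_q theta: all those L_{a,b} are
   blocks, and by planarity two of them with a <> a' share at most one point.  Choose v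
   with f(v+1) - f(v) = theta and put u = v+1; as f is even, the blocks L_{-u,f v},
   L_{u,f v}, L_{-v,f u}, L_{v,f u} meet pairwise in the six distinct points (0, +-theta),
   (+-(u+v), 0), (+-(u-v), 0).  Finally x^(p^k+1) is planar because w^(p^k) = -w forces
   w = 0 when 2n/gcd(2n,k) is odd. *)

From mathcomp Require Import all_boot all_order all_algebra all_field.
From mathcomp Require Import ring.
Set Implicit Arguments. Unset Strict Implicit. Unset Printing Implicit Defensive.
Import GRing.Theory Num.Theory.
Local Open Scope ring_scope.

Definition planar (F : zmodType) (f : F -> F) :=
  forall a, a != 0 -> injective (fun y => f (y + a) - f y).

Section Frobenius.
Variables (F : fieldType) (p : nat).
Hypothesis pF : p \in [pchar F].

Lemma pnat_pchar_expn j : [pchar F].-nat (p ^ j)%N.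
Proof. by rewrite (eq_pnat _ (pcharf_eq pF)) pnatX pnat_id ?orbT // (pcharf_prime pF). Qed.

Lemma expr_ppowD j (x y : F) : (x + y) ^+ (p ^ j) = x ^+ (p ^ j) + y ^+ (p ^ j).
Proof. exact: exprDn_pchar (pnat_pchar_expn j). Qed.

Lemma expr_ppowN j (x : F) : (- x) ^+ (p ^ j) = - x ^+ (p ^ j).
Proof. exact: exprNn_pchar (pnat_pchar_expn j). Qed.

Lemma two_neq0 : odd p -> (2%:R : F) != 0.
Proof.
move=> p_odd; rewrite -(dvdn_pcharf pF); apply: contraL p_odd => /(dvdn_leq (isT : (0 < 2)%N)).
by have := prime_gt1 (pcharf_prime pF); case: p => [|[|[|]]].
Qed.

Lemma eqN_eq0 (x : F) : odd p -> x = - x -> x = 0.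
Proof.
move=> p_odd ex; apply/eqP; rewrite -(mulrI_eq0 _ (mulfI (two_neq0 p_odd))).
by rewrite mulr2n mulrDl mul1r {1}ex addNr.
Qed.

End Frobenius.

Lemma expf_card_pow (F : finFieldType) (x : F) c : x ^+ (#|F| ^ c) = x.
Proof. by elim: c => [|c IHc]; rewrite ?expr1 // expnSr exprM IHc expf_card. Qed.

Lemma planar_sqr (F : fieldType) : (2%:R : F) != 0 -> planar (fun x : F => x ^+ 2).
Proof.
move=> two0 a a0 y1 y2 /= e.
have : 2%:R * a * (y1 - y2) = 0.
  by rewrite -[RHS](subrr ((y1 + a) ^+ 2 - y1 ^+ 2)) {2}e; ring.
by move/eqP; rewrite !mulf_eq0 (negPf two0) (negPf a0) subr_eq0 => /eqP.
Qed.

Lemma planar_ppow_succ (F : fieldType) (p k : nat) : p \in [pchar F] ->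
  (forall w : F, w ^+ (p ^ k) = - w -> w = 0) -> planar (fun x : F => x ^+ (p ^ k + 1)).
Proof.
move=> pF frobN_eq0 a a0 y1 y2 /= e.
have diffE (y : F) : (y + a) ^+ (p ^ k + 1) - y ^+ (p ^ k + 1)
    = a * y ^+ (p ^ k) + a ^+ (p ^ k) * y + a ^+ (p ^ k) * a.
  by rewrite addn1 !exprS (expr_ppowD pF); ring.
have lin0 : a * (y1 - y2) ^+ (p ^ k) + a ^+ (p ^ k) * (y1 - y2) = 0.
  rewrite (expr_ppowD pF) (expr_ppowN pF).
  rewrite -[RHS](subrr ((y1 + a) ^+ (p ^ k + 1) - y1 ^+ (p ^ k + 1))) {2}e !diffE.
  ring.
have [w y1E] : exists w, y1 = y2 + a * w by exists ((y1 - y2) / a); field.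
rewrite y1E (addrC y2) addrK in lin0.
suff w0 : w = 0 by rewrite y1E w0 mulr0 addr0.
apply: frobN_eq0; apply/eqP; rewrite -addr_eq0.
have : a * a ^+ (p ^ k) * (w ^+ (p ^ k) + w) = 0.
  by rewrite -[RHS]lin0 exprMn; ring.
by move/eqP; rewrite !mulf_eq0 expf_eq0 (negPf a0) andbF.
Qed.

Section SquareOrderField.
Variables (F : finFieldType) (p n : nat).
Hypotheses (pF : p \in [pchar F]) (p_odd : odd p) (cardF : #|F| = (p ^ n * p ^ n)%N).
Local Notation q := (p ^ n)%N.

Lemma expr_ppow_eqN_eq0 k (w : F) : odd ((2 * n) %/ gcdn (2 * n) k) ->
  w ^+ (p ^ k) = - w -> w = 0.
Proof.
move=> odd_ratio wN; apply: (eqN_eq0 pF p_odd).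
have iterN j : w ^+ (p ^ (k * j)) = if odd j then - w else w.
  elim: j => [|j IHj]; first by rewrite muln0 expr1.
  rewrite mulnS expnD mulnC exprM IHj /=.
  by case: (odd j); rewrite /= ?(expr_ppowN pF) wN ?opprK.
have := iterN ((2 * n) %/ gcdn (2 * n) k)%N.
rewrite odd_ratio (gcdnC (2 * n)%N) muln_divCA_gcd expnM mul2n -addnn expnD -cardF.
by rewrite expf_card_pow.
Qed.

Lemma expr_q_invol (x : F) : (x ^+ q) ^+ q = x.
Proof. by rewrite -exprM -cardF expf_card. Qed.

Lemma q_gt1 : (1 < q)%N.
Proof. by have := card_finNzRing_gt1 F; rewrite cardF; case: (p ^ n)%N => [|[|]]. Qed.

Definition frobq_eigen (c : F) := [set x : F | x ^+ q == c * x].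

Lemma card_frobq_eigen_le c : (#|frobq_eigen c| <= q)%N.
Proof.
pose P : {poly F} := 'X^q - c *: 'X.
have szP : size P = q.+1.
  rewrite size_polyDl size_polyXn // size_polyN.
  by apply: (leq_ltn_trans (size_scale_leq _ _)); rewrite size_polyX ltnS q_gt1.
have P_neq0 : P != 0 by rewrite -size_poly_eq0 szP.
have := max_poly_roots P_neq0 (rs := enum (frobq_eigen c)).
rewrite szP ltnS -cardE; apply; last exact: enum_uniq.
apply/allP => x; rewrite mem_enum inE => /eqP xq.
by rewrite /root /P !hornerE xq subrr.
Qed.

(* With h = 1/2, x = h (x + x^q) + h (x - x^q) embeds F into
   frobq_eigen 1 * frobq_eigen (-1), whose factors have at most q elements. *)
Lemma card_frobq_eigen1 : #|frobq_eigen 1| = q.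
Proof.
apply/eqP; rewrite eqn_leq card_frobq_eigen_le /=.
pose h := (2%:R : F)^-1.
have hq : h ^+ q = h by rewrite exprVn -addn1 natrD (expr_ppowD pF) expr1n.
pose g x := (h * (x + x ^+ q), h * (x - x ^+ q)).
have ginj : injective g.
  have halfK x : h * (x + x ^+ q) + h * (x - x ^+ q) = x.
    by rewrite -mulrDr addrACA subrr addr0 -mulr2n -mulr_natr mulrC mulfK // (two_neq0 pF).
  by move=> x y [ex ey]; rewrite -[x]halfK -[y]halfK ex ey.
have : g @: [set: F] \subset setX (frobq_eigen 1) (frobq_eigen (-1)).
  apply/subsetP => _ /imsetP[x _ ->]; rewrite !inE /= !exprMn hq.
  rewrite !(expr_ppowD pF) !(expr_ppowN pF) expr_q_invol.
  by apply/andP; split; apply/eqP; ring.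
move/subset_leq_card; rewrite card_imset // cardsX cardsT cardF => /leq_trans.
move/(_ _ (leq_mul (leqnn _) (card_frobq_eigen_le (-1)))).
by rewrite leq_pmul2r // ltnW // q_gt1.
Qed.

End SquareOrderField.

Lemma card_set_sum (T : finType) (P : pred T) : #|[set x | P x]| = (\sum_x P x)%N.
Proof. by rewrite -sum1dep_card big_mkcond; apply: eq_bigr => x _; case: (P x). Qed.

Lemma double_count (T U : finType) (R : T -> U -> bool) :
  (\sum_u #|[set t | R t u]| = \sum_t #|[set u | R t u]|)%N.
Proof.
under eq_bigr do rewrite card_set_sum; under [RHS]eq_bigr do rewrite card_set_sum.
exact: exchange_big.
Qed.

Lemma card_set_pair (T U : finType) (R : T -> U -> bool) :
  #|[set w : T * U | R w.1 w.2]| = (\sum_t #|[set u | R t u]|)%N.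
Proof.
rewrite card_set_sum; under [RHS]eq_bigr do rewrite card_set_sum.
by rewrite pair_big.
Qed.

Section ONanFromBlocks.
Variables (F : finFieldType) (f : F -> F) (q : nat) (U : {set pt F}).
Variables (L0 L1 L2 L3 : ln F) (P01 P02 P03 P12 P13 P23 : pt F).
Hypotheses (q_gt0 : (0 < q)%N)
  (L0_block : is_block_line f q U L0) (L1_block : is_block_line f q U L1)
  (L2_block : is_block_line f q U L2) (L3_block : is_block_line f q U L3)
  (meet01 : block f U L0 :&: block f U L1 = [set P01])
  (meet02 : block f U L0 :&: block f U L2 = [set P02])
  (meet03 : block f U L0 :&: block f U L3 = [set P03])
  (meet12 : block f U L1 :&: block f U L2 = [set P12])
  (meet13 : block f U L1 :&: block f U L3 = [set P13])
  (meet23 : block f U L2 :&: block f U L3 = [set P23])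
  (meets_uniq : uniq [:: P01; P02; P03; P12; P13; P23]).

Let line (i : 'I_4) : ln F :=
  match val i with 0 => L0 | 1 => L1 | 2 => L2 | _ => L3 end.

Let meet (i j : 'I_4) : pt F :=
  match val i, val j with
  | 0, 1 | 1, 0 => P01
  | 0, 2 | 2, 0 => P02
  | 0, 3 | 3, 0 => P03
  | 1, 2 | 2, 1 => P12
  | 1, 3 | 3, 1 => P13
  | _, _ => P23
  end.

Let blocks_meet i j : i != j -> block f U (line i) :&: block f U (line j) = [set meet i j].
Proof.
case: i j => [[|[|[|[|i]]]] Hi] [[|[|[|[|j]]]] Hj] //= _; rewrite /line /meet /=;
  by rewrite ?(setIC (block f U L1)) ?(setIC (block f U L2)) ?(setIC (block f U L3)).
Qed.

Lemma has_ONan_of_blocks : has_ONan f q U.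
Proof.
have line_block i : is_block_line f q U (line i) by case: i => [[|[|[|[|i]]]] Hi].
exists line; split=> //; split.
  move=> i j /blocks_meet meet_ij; apply/eqP => same_block.
  move: meet_ij; rewrite same_block setIid => line_meet; have := line_block j.
  by rewrite /is_block_line line_meet cards1 eqSS eq_sym (gtn_eqF q_gt0).
exists meet; split; first exact: blocks_meet.
case=> [[|[|[|[|i]]]] Hi] [[|[|[|[|j]]]] Hj]
  [[|[|[|[|i']]]] Hi'] [[|[|[|[|j']]]] Hj'] //= _ _ _; rewrite /meet /=;
  by apply/eqP => e; move: meets_uniq; rewrite e /= !inE ?eqxx ?orbT ?andbF.
Qed.

End ONanFromBlocks.

Lemma inl_pair_eq (F : finFieldType) (x y x' y' : F) :
  (inl (x, y) == inl (x', y') :> pt F) = (x == x') && (y == y').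
Proof. by []. Qed.

Section Unital.
Variables (F : finFieldType) (p n : nat).
Hypotheses (pF : p \in [pchar F]) (p_odd : odd p) (cardF : #|F| = (p ^ n * p ^ n)%N).
Local Notation q := (p ^ n)%N.
Variables (f : F -> F) (theta : F).
Hypotheses (f_planar : planar f) (f_sqr : forall y, exists g, f y = g ^+ 2)
  (f_eq0 : forall y, (f y == 0) = (y == 0)) (f_even : forall y, f (- y) = f y)
  (theta_neq0 : theta != 0)
  (theta_nsq : ~ exists t : F, t ^+ q = t /\ t ^+ 2 = theta ^+ (q + 1)).

Definition Fq_theta : {set F} := (fun t => t * theta) @: frobq_eigen p n 1.

Lemma Fq_thetaP y : reflect (exists t, t ^+ q = t /\ y = t * theta) (y \in Fq_theta).
Proof.
apply: (iffP imsetP) => [[t]|[t [tq ->]]]; last by exists t; rewrite // inE mul1r tq.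
by rewrite inE mul1r => /eqP tq ->; exists t.
Qed.

Lemma card_frobq_eigen1_theta : #|Fq_theta| = q.
Proof. by rewrite card_imset ?(card_frobq_eigen1 pF p_odd cardF) //; exact: mulIf. Qed.

Lemma Fq_theta0 : 0 \in Fq_theta.
Proof.
apply/Fq_thetaP; exists 0; rewrite mul0r expr0n gtn_eqF //.
exact: ltnW (q_gt1 cardF).
Qed.

Lemma Fq_thetaB x y : x \in Fq_theta -> y \in Fq_theta -> x - y \in Fq_theta.
Proof.
move=> /Fq_thetaP[s [sq ->]] /Fq_thetaP[t [tq ->]]; apply/Fq_thetaP; exists (s - t).
by rewrite (expr_ppowD pF) (expr_ppowN pF) sq tq mulrBl.
Qed.

Lemma Fq_thetaN y : y \in Fq_theta -> - y \in Fq_theta.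
Proof. by rewrite -sub0r; apply: Fq_thetaB Fq_theta0. Qed.

Lemma Fq_thetaD x y : x \in Fq_theta -> y \in Fq_theta -> x + y \in Fq_theta.
Proof. by move=> Hx /Fq_thetaN Hy; rewrite -[y]opprK Fq_thetaB. Qed.

Lemma Fq_theta_theta : theta \in Fq_theta.
Proof. by apply/Fq_thetaP; exists 1; rewrite expr1n mul1r. Qed.

(* The witness [w ^+ q.+1 / t] is a square root of [theta ^+ q.+1] in F_q. *)
Lemma sqr_Fq_theta_eq0 w : w ^+ 2 \in Fq_theta -> w = 0.
Proof.
case/Fq_thetaP=> t [tq w2E]; apply/eqP/negPn/negP => w_neq0.
have t_neq0 : t != 0.
  by apply: contraNneq (expf_neq0 2 w_neq0) => t0; rewrite w2E t0 mul0r.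
apply: theta_nsq; exists (w ^+ q.+1 / t); split.
  rewrite expr_div_n tq -exprM mulnC exprM [X in X / _]exprS.
  by rewrite (expr_q_invol cardF) (mulrC (w ^+ q)) -exprS.
rewrite expr_div_n -exprM mulnC exprM w2E exprMn [t ^+ _]exprS tq -expr2 addn1.
by rewrite mulrAC divff ?mul1r // expf_neq0.
Qed.

Lemma f_Fq_theta_eq0 y : f y \in Fq_theta -> y = 0.
Proof.
have [g fyE] := f_sqr y; rewrite fyE => /sqr_Fq_theta_eq0 g0.
by apply/eqP; rewrite -f_eq0 fyE g0 expr0n.
Qed.

Lemma f0 : f 0 = 0.
Proof. by apply/eqP; rewrite f_eq0. Qed.

Definition nsol b := #|[set y | f y - b \in Fq_theta]|.

Lemma nsol_Fq_theta b : b \in Fq_theta -> nsol b = 1%N.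
Proof.
move=> Hb; rewrite /nsol -(cards1 (0 : F)); apply: eq_card => y; rewrite !inE.
apply/idP/eqP => [Hy|->]; last by rewrite f0 sub0r Fq_thetaN.
by apply: f_Fq_theta_eq0; rewrite -(subrK b (f y)) Fq_thetaD.
Qed.

Lemma card_sub_Fq_theta c : #|[set z | c - z \in Fq_theta]| = q.
Proof.
rewrite -card_frobq_eigen1_theta -[RHS](card_preimset _ (f := fun z => c - z)); last first.
  by move=> x y /= /addrI /oppr_inj.
by apply: eq_card => z; rewrite !inE.
Qed.

Lemma sum_nsol : (\sum_b nsol b = q * q * q)%N.
Proof.
rewrite /nsol (double_count (fun y b => f y - b \in Fq_theta)).
under eq_bigr do rewrite card_sub_Fq_theta.
by rewrite sum_nat_const cardT -cardT cardF mulnC.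
Qed.

Lemma card_fdiff_Fq_theta :
  #|[set w : F * F | f w.1 - f w.2 \in Fq_theta]| = (q * q + (q * q).-1 * q)%N.
Proof.
pose g (w : F * F) := (w.1 + w.2, w.2).
have g_inj : injective g by move=> [a b] [c d] [] /= /[swap] -> /addIr ->.
rewrite -(card_preimset _ g_inj).
rewrite (eq_card (B := [set w : F * F | f (w.1 + w.2) - f w.2 \in Fq_theta])); last first.
  by move=> w; rewrite !inE.
rewrite (card_set_pair (fun a y => f (a + y) - f y \in Fq_theta)) (bigD1 0) //=.
congr (_ + _)%N.
  rewrite -cardF -cardsT; apply: eq_card => y; rewrite !inE add0r subrr.
  exact: Fq_theta0.
rewrite (eq_bigr (fun _ => q)) ?sum_nat_const ?cardC1 ?cardF // => a a0.
rewrite -card_frobq_eigen1_theta -[RHS](card_preimset _ (f_planar a0)).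
by apply: eq_card => y; rewrite !inE (addrC a).
Qed.

Lemma sum_nsol_sqr : (\sum_b nsol b * nsol b = q * (q * q + (q * q).-1 * q))%N.
Proof.
have sqrE b : (nsol b * nsol b)%N
    = #|[set w : F * F | (f w.1 - b \in Fq_theta) && (f w.2 - b \in Fq_theta)]|.
  by rewrite /nsol -cardsX; apply: eq_card => w; rewrite !inE.
under eq_bigr do rewrite sqrE.
rewrite (double_count (fun (w : F * F) b => (f w.1 - b \in Fq_theta) && (f w.2 - b \in Fq_theta))).
have pairE (w : F * F) :
    #|[set b | (f w.1 - b \in Fq_theta) && (f w.2 - b \in Fq_theta)]|
    = muln (f w.1 - f w.2 \in Fq_theta) q.
  case: (boolP (f w.1 - f w.2 \in Fq_theta)) => H.
    rewrite mul1n -(card_sub_Fq_theta (f w.2)); apply: eq_card => b; rewrite !inE.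
    apply/andP/idP => [[//]|Hb]; split => //.
    have -> : f w.1 - b = (f w.1 - f w.2) + (f w.2 - b) by rewrite addrA subrK.
    exact: Fq_thetaD.
  rewrite mul0n; apply: eq_card0 => b; rewrite !inE; apply: contraNF H => /andP[H1 H2].
  have -> : f w.1 - f w.2 = (f w.1 - b) - (f w.2 - b) by rewrite opprB addrA subrK.
  exact: Fq_thetaB.
under eq_bigr do rewrite pairE.
by rewrite -big_distrl /= -card_set_sum card_fdiff_Fq_theta mulnC.
Qed.

(* The [b] in [Fq_theta] alone already account for the whole second moment of
   [nsol] about [q.+1]. *)
Lemma nsol_notin b : b \notin Fq_theta -> nsol b = q.+1.
Proof.
move=> bN; pose N z : int := (nsol z)%:R; pose c : int := (q.+1)%:R.
have q_gt0 : (0 < q)%N := ltnW (q_gt1 cardF).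
have sumN : \sum_z N z = (q * q * q)%:R by rewrite -natr_sum sum_nsol.
have sumN2 : \sum_z N z * N z = (q * (q * q + (q * q).-1 * q))%:R.
  by rewrite -sum_nsol_sqr natr_sum; apply: eq_bigr => z _; rewrite natrM.
have var : \sum_z (N z - c) ^+ 2 = (q * q * q)%:R.
  rewrite (eq_bigr (fun z => N z * N z - c *+ 2 * N z + c ^+ 2)); last by move=> z _; ring.
  rewrite big_split /= sumrB -mulr_sumr sumr_const sumN sumN2 cardF.
  by rewrite /c -subn1 -mulr_natr !(natrD, natrM, natrB) ?muln_gt0 ?q_gt0 //; ring.
have varFq : \sum_(z | z \in Fq_theta) (N z - c) ^+ 2 = (q * q * q)%:R.
  rewrite (eq_bigr (fun _ => (q * q)%:R)) => [|z Hz]; last first.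
    by rewrite /N nsol_Fq_theta // /c -addn1 natrD !natrM; ring.
  by rewrite sumr_const card_frobq_eigen1_theta [RHS]natrM mulr_natr.
move: var; rewrite (bigID (mem Fq_theta)) /= varFq -[RHS]addr0 => /addrI var0.
have /eqP := @psumr_eq0P _ _ _ _ (fun z _ => sqr_ge0 (N z - c)) var0 b bN.
by rewrite sqrf_eq0 subr_eq0 eqr_nat => /eqP.
Qed.

Local Notation U := (U_theta q theta).

Lemma in_U_inl x y : (inl (x, y) \in U) = (y \in Fq_theta).
Proof.
rewrite inE; apply/existsP/Fq_thetaP => [[t /andP[/eqP tq /eqP ->]]|[t [tq ->]]].
  by exists t.
by exists t; rewrite tq !eqxx.
Qed.

Lemma in_block_inl a b x y :
  (inl (x, y) \in block f U (inl (a, b))) = (y \in Fq_theta) && (y == f (x + a) - b).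
Proof. by rewrite /block in_setI in_U_inl /line_pts inE. Qed.

Lemma block_inlP a b P : P \in block f U (inl (a, b)) ->
  exists x, P = inl (x, f (x + a) - b) /\ f (x + a) - b \in Fq_theta.
Proof.
case: P => [[x y]|[c|]]; [|by rewrite /block !inE..].
by rewrite in_block_inl => /andP[Hy /eqP yE]; exists x; rewrite -yE.
Qed.

Lemma is_block_line_inl a b : b \notin Fq_theta -> is_block_line f q U (inl (a, b)).
Proof.
move=> bN; rewrite /is_block_line -(nsol_notin bN).
have -> : block f U (inl (a, b)) =
    (fun z => inl (z - a, f z - b)) @: [set z | f z - b \in Fq_theta] :> {set pt F}.
  apply/setP => P; apply/idP/imsetP => [/block_inlP[x [-> Hx]]|[z Hz ->]].
    by exists (x + a); rewrite ?inE // addrK.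
  by rewrite in_block_inl subrK eqxx andbT; rewrite inE in Hz.
by rewrite card_imset // => z z' [] /addIr.
Qed.

Lemma block_inl_meet a b a' b' x y : a != a' -> y \in Fq_theta ->
  f (x + a) - b = y -> f (x + a') - b' = y ->
  block f U (inl (a, b)) :&: block f U (inl (a', b')) = [set inl (x, y)].
Proof.
move=> aa' Hy xaE xa'E; apply/setP => P; rewrite in_setI in_set1.
apply/andP/eqP => [[]|->]; last by rewrite !in_block_inl Hy -{1}xaE -xa'E !eqxx.
move=> /block_inlP[z [-> _]] /block_inlP[z' [[<- zE] _]].
have diffE w : f (w + a) - b = f (w + a') - b' ->
    f (w + a' + (a - a')) - f (w + a') = b - b'.
  move=> wE; rewrite [a - a']addrC addrA addrK -[f (w + a)](subrK b) wE; ring.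
have aa'0 : a - a' != 0 by rewrite subr_eq0.
suff /addIr -> : z + a' = x + a' by rewrite xaE.
by apply: (f_planar aa'0); rewrite /= !diffE // xaE xa'E.
Qed.

Lemma uniq_ONan_points u v : u != 0 -> v != 0 -> u + v != 0 -> u - v != 0 ->
  uniq ([:: inl (0, theta); inl (u + v, 0); inl (u - v, 0); inl (v - u, 0);
            inl (- u - v, 0); inl (0, - theta)] : seq (pt F)).
Proof.
move=> u0 v0 uDv0 uBv0.
have neq_double (x y w : F) : w != 0 -> x - y = 2%:R * w -> (x == y) = false.
  by move=> w0 xyE; apply/negbTE; rewrite -subr_eq0 xyE mulf_neq0 ?(two_neq0 pF).
have thN : (0 == - theta) = false by rewrite eq_sym oppr_eq0 (negbTE theta_neq0).
have thth : (theta == - theta) = false by apply: (neq_double _ _ theta) => //; ring.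
have AB : (u + v == u - v) = false by apply: (neq_double _ _ v) => //; ring.
have AC : (u + v == v - u) = false by apply: (neq_double _ _ u) => //; ring.
have AD : (u + v == - u - v) = false by apply: (neq_double _ _ (u + v)) => //; ring.
have BC : (u - v == v - u) = false by apply: (neq_double _ _ (u - v)) => //; ring.
have BD : (u - v == - u - v) = false by apply: (neq_double _ _ u) => //; ring.
have CD : (v - u == - u - v) = false by apply: (neq_double _ _ v) => //; ring.
rewrite /= !inE !inl_pair_eq !eqxx (negbTE theta_neq0) thN thth AB AC AD BC BD CD.
by rewrite !andbF.
Qed.

Lemma theta_pair : exists u v, [/\ u - v = 1, f u - f v = theta, u != 0, v != 0 & u + v != 0].
Proof.
have [g _ gK] := injF_bij (f_planar (oner_neq0 F)).
exists (g theta + 1), (g theta); set v := g theta; set u := v + 1.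
have uBv : u - v = 1 by rewrite addrAC subrr add0r.
have fuv : f u - f v = theta := gK theta.
have not_both0 : u = 0 -> v = 0 -> False.
  by move=> u0 v0; move: uBv; rewrite u0 v0 subr0 => /eqP; rewrite eq_sym oner_eq0.
split=> //.
- apply/eqP => u0; apply: (not_both0 u0); apply: f_Fq_theta_eq0.
  have -> : f v = - theta by rewrite -fuv u0 f0 sub0r opprK.
  exact/Fq_thetaN/Fq_theta_theta.
- apply/eqP => v0; apply: (not_both0 _ v0); apply: f_Fq_theta_eq0.
  have -> : f u = theta by rewrite -fuv v0 f0 subr0.
  exact: Fq_theta_theta.
- rewrite addr_eq0; apply: contra_neq theta_neq0 => uE.
  by rewrite -fuv uE f_even subrr.
Qed.

Lemma U_theta_has_ONan : has_ONan f q U.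
Proof.
have [u [v [uBv fuv u0 v0 uDv0]]] := theta_pair.
have uv_neq : u != v by rewrite -subr_eq0 uBv oner_neq0.
have Nneq (w : F) : w != 0 -> - w != w.
  by move=> w0; apply: contra_neq w0 => wN; apply: (eqN_eq0 pF p_odd); rewrite wN.
have fuN : f u \notin Fq_theta by apply: contra u0 => /f_Fq_theta_eq0 ->.
have fvN : f v \notin Fq_theta by apply: contra v0 => /f_Fq_theta_eq0 ->.
apply: (has_ONan_of_blocks (L0 := inl (- u, f v)) (L1 := inl (u, f v))
  (L2 := inl (- v, f u)) (L3 := inl (v, f u))
  (P01 := inl (0, theta)) (P02 := inl (u + v, 0)) (P03 := inl (u - v, 0))
  (P12 := inl (v - u, 0)) (P13 := inl (- u - v, 0)) (P23 := inl (0, - theta))).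
- exact: ltnW (q_gt1 cardF).
- exact: is_block_line_inl.
- exact: is_block_line_inl.
- exact: is_block_line_inl.
- exact: is_block_line_inl.
- apply: (block_inl_meet (Nneq u u0) Fq_theta_theta).
  + by rewrite add0r f_even.
  + by rewrite add0r.
- apply: (block_inl_meet _ Fq_theta0); first by rewrite eqr_opp.
  + by rewrite (addrC u) addrK subrr.
  + by rewrite addrK subrr.
- apply: (block_inl_meet _ Fq_theta0); first by rewrite eq_sym -addr_eq0 addrC.
  + by rewrite addrAC subrr add0r f_even subrr.
  + by rewrite subrK subrr.
- apply: (block_inl_meet _ Fq_theta0); first by rewrite -addr_eq0.
  + by rewrite subrK subrr.
  + by rewrite addrAC subrr add0r f_even subrr.
- apply: (block_inl_meet uv_neq Fq_theta0).
  + by rewrite addrAC addNr add0r f_even subrr.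
  + by rewrite subrK f_even subrr.
- apply: (block_inl_meet (Nneq v v0) (Fq_thetaN Fq_theta_theta)).
  + by rewrite add0r f_even -fuv opprB.
  + by rewrite add0r -fuv opprB.
- by apply: uniq_ONan_points; rewrite // uBv oner_neq0.
Qed.

End Unital.

Lemma U_theta_has_ONan_even_expr (F : finFieldType) (p n e : nat) (theta : F) :
  p \in [pchar F] -> odd p -> #|F| = (p ^ n * p ^ n)%N ->
  (0 < e)%N -> ~~ odd e -> planar (fun x : F => x ^+ e) -> theta != 0 ->
  ~ (exists t : F, t ^+ (p ^ n) = t /\ t ^+ 2 = theta ^+ (p ^ n + 1)) ->
  has_ONan (fun x : F => x ^+ e) (p ^ n) (U_theta (p ^ n) theta).
Proof.
move=> pF p_odd cardF e_gt0 e_even e_planar theta_neq0 theta_nsq.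
apply: U_theta_has_ONan => //.
- move=> y; exists (y ^+ e./2).
  by rewrite -exprM muln2 -{1}(odd_double_half e) (negPf e_even) add0n.
- by move=> y; rewrite expf_eq0 e_gt0.
- by move=> y; rewrite exprNn -signr_odd (negPf e_even) mul1r.
Qed.

Theorem theorem3p14 (p n k : nat) (F : finFieldType) (f : F -> F) (theta : F) :
  prime p -> odd p -> (0 < n)%N ->
  #|F| = (p ^ (2 * n))%N ->
  (1 <= k <= n)%N ->
  odd ((2 * n) %/ gcdn (2 * n) k) ->
  (f = (fun x => x ^+ 2) \/ f = (fun x => x ^+ (p ^ k + 1))) ->
  theta != 0 ->
  ~ (exists t : F, t ^+ (p ^ n) = t /\ t ^+ 2 = theta ^+ (p ^ n + 1)) ->
  has_ONan f (p ^ n) (U_theta (p ^ n) theta).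
Proof.
move=> p_prime p_odd _ cardF _ odd_ratio f_def theta_neq0 theta_nsq.
have pF : p \in [pchar F] := card_finPcharP cardF p_prime.
have cardF2 : #|F| = (p ^ n * p ^ n)%N by rewrite cardF mul2n -addnn expnD.
case: f_def => ->; apply: U_theta_has_ONan_even_expr => //.
- exact/planar_sqr/(two_neq0 pF).
- by rewrite addn1.
- by rewrite oddD oddX p_odd orbT.
- apply: (planar_ppow_succ pF) => w.
  exact: (expr_ppow_eqN_eq0 pF p_odd cardF2 odd_ratio).
Qed.
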